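(* For every hypergraph $\mathcal{H}$ we have $\tau_2(\mathcal{H})/2\le \mathrm{dec}(\mathcal{H})\le \tau_2(\mathcal{H})-1$, and both bounds are tight (each holds with equality for some hypergraphs). In particular, $\tau_2(\mathcal{H})$ is a 2-approximation for $\mathrm{dec}(\mathcal{H})$.
   Context: A hypergraph $\mathcal{H}=(X,\mathcal{E})$ has a finite vertex set $X$, $|X|=n$, and a family of edges, each a subset of $X$ with at least 2 vertices. A C-coloring is a map $\varphi:X\to\mathbb{N}$ such that every edge contains two distinct vertices of the same color; $\overline{\chi}(\mathcal{H})$ is the maximum number of colors used by a C-coloring and $\mathrm{dec}(\mathcal{H})=n-\overline{\chi}(\mathcal{H})$. $\tau_2(\mathcal{H})$ is the minimum size of a set $T\subseteq X$ with $|E\cap T|\ge2$ for every edge $E$. *)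

From mathcomp Require Import all_boot.
From Stdlib Require Import ClassicalEpsilon.
Set Implicit Arguments.
Unset Strict Implicit.
Unset Printing Implicit Defensive.

Definition is_hypergraph (X : finType) (E : {set {set X}}) : Prop :=
  forall e, e \in E -> 2 <= #|e|.

Definition ncolors (X : finType) (phi : X -> nat) : nat :=
  size (undup [seq phi x | x <- enum X]).

Definition C_coloring (X : finType) (E : {set {set X}}) (phi : X -> nat) : Prop :=
  forall e, e \in E ->
    exists x y, [/\ x \in e, y \in e, x != y & phi x = phi y].

Definition uses_colors (X : finType) (E : {set {set X}}) (k : nat) : bool :=
  if excluded_middle_informative
       (exists phi : X -> nat, C_coloring E phi /\ ncolors phi = k)
  then true else false.

(* Upper chromatic number: maximum number of colors of a C-coloring.
   Since a coloring uses at most #|X| colors, the max over k <= #|X| is the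
   max over all C-colorings. *)
Definition chibar (X : finType) (E : {set {set X}}) : nat :=
  \max_(k < #|X|.+1 | uses_colors E k) k.

Definition dec (X : finType) (E : {set {set X}}) : nat := #|X| - chibar E.

(* tau_2: minimum size of T with |e :&: T| >= 2 for every edge e
   (default #|X| is attained by T = X for a hypergraph). *)
Definition tau2 (X : finType) (E : {set {set X}}) : nat :=
  \big[minn/#|X|]_(T : {set X} | [forall e in E, 2 <= #|e :&: T|]) #|T|.

(* Lower bound: from a C-coloring pick one representative per color class; the vertices
   that are not representatives, together with the representatives of their classes, meet
   every edge twice, and there are at most 2 (n - #colors) of them.
   Upper bound: given a 2-transversal T, color all of T with one color and every other
   vertex with its own color; each edge has two vertices in T, so this is a C-coloring
   with n - |T| + 1 colors.
   Both bounds are attained by a single edge on two vertices (tau_2 = 2, dec = 1). *)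
From mathcomp Require Import all_boot.
From mathcomp Require Import zify.
From Stdlib Require Import ClassicalEpsilon.
Set Implicit Arguments.
Unset Strict Implicit.
Unset Printing Implicit Defensive.

Definition is_2transversal (X : finType) (E : {set {set X}}) (T : {set X}) : bool :=
  [forall e in E, 2 <= #|e :&: T|].

Lemma big_minn_leq (I : eqType) (r : seq I) (P : pred I) (F : I -> nat) m j :
  j \in r -> P j -> \big[minn/m]_(i <- r | P i) F i <= F j.
Proof.
elim: r => // i r IHr; rewrite inE big_cons => /predU1P [<- -> | jr Pj].
  exact: geq_minl.
by case: ifP => _; rewrite ?geq_min IHr ?orbT.
Qed.

Section Colorings.
Variable X : finType.
Implicit Types (phi : X -> nat) (E : {set {set X}}) (R T : {set X}).

Lemma ncolors_leq_card phi : ncolors phi <= #|X|.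
Proof. by rewrite /ncolors cardE -(size_map phi) size_undup. Qed.

Lemma ncolors_eq_card phi R :
  {in R &, injective phi} -> (forall x, exists2 y, y \in R & phi y = phi x) ->
  ncolors phi = #|R|.
Proof.
move=> phi_inj phi_onto; rewrite /ncolors cardE -(size_map phi).
apply/perm_size/uniq_perm; first exact: undup_uniq.
  by rewrite map_inj_in_uniq ?enum_uniq // => x y; rewrite !mem_enum; apply: phi_inj.
move=> c; rewrite mem_undup; apply/mapP/mapP => [[x _ ->]|[y _ ->]].
  by have [y yR <-] := phi_onto x; exists y; rewrite ?mem_enum.
by exists y; rewrite ?mem_enum.
Qed.

Lemma C_coloring_uses_colors E phi : C_coloring E phi -> uses_colors E (ncolors phi).
Proof.
by move=> Cphi; rewrite /uses_colors; case: excluded_middle_informative => // -[]; exists phi.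
Qed.

Lemma uses_colorsP E k :
  uses_colors E k -> exists phi, C_coloring E phi /\ ncolors phi = k.
Proof. by rewrite /uses_colors; case: excluded_middle_informative. Qed.

Lemma ncolors_leq_chibar E phi : C_coloring E phi -> ncolors phi <= chibar E.
Proof.
move=> Cphi; have ltk : ncolors phi < #|X|.+1 by rewrite ltnS ncolors_leq_card.
exact: (leq_bigmax_cond (Ordinal ltk) (C_coloring_uses_colors Cphi)).
Qed.

Lemma tau2_leq E T : is_2transversal E T -> tau2 E <= #|T|.
Proof. by move=> ET; rewrite /tau2 big_minn_leq ?mem_index_enum. Qed.

Lemma tau2_leq_card E : tau2 E <= #|X|.
Proof.
apply: (big_ind (fun m => m <= #|X|)) => // [m1 m2 ? ?|T _]; last exact: max_card.
by rewrite geq_min; apply/orP; left.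
Qed.

Section ColorRepresentative.
Variable phi : X -> nat.

Definition color_repr (x : X) : X := odflt x [pick y | phi y == phi x].

Lemma color_repr_color x : phi (color_repr x) = phi x.
Proof. by rewrite /color_repr; case: pickP => [y /eqP|]. Qed.

Lemma color_repr_eq x y : phi x = phi y -> color_repr x = color_repr y.
Proof.
rewrite /color_repr => phixy; rewrite phixy.
by case: pickP => //= /(_ y); rewrite eqxx.
Qed.

Definition color_reprs : {set X} := [set x | color_repr x == x].

Lemma color_repr_in x : color_repr x \in color_reprs.
Proof. by rewrite inE (color_repr_eq (color_repr_color x)). Qed.

Lemma color_reprs_inj : {in color_reprs &, injective phi}.
Proof.
by move=> x y; rewrite !inE => /eqP {2}<- /eqP {2}<- /color_repr_eq.
Qed.

Lemma ncolors_color_reprs : ncolors phi = #|color_reprs|.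
Proof.
apply: ncolors_eq_card; first exact: color_reprs_inj.
by move=> x; exists (color_repr x); rewrite ?color_repr_in ?color_repr_color.
Qed.

Definition repr_cover : {set X} := ~: color_reprs :|: color_repr @: ~: color_reprs.

Lemma card_repr_cover : #|repr_cover| <= 2 * (#|X| - ncolors phi).
Proof.
rewrite ncolors_color_reprs -(cardsC color_reprs) addKn mul2n -addnn.
by rewrite (leq_trans (leq_card_setU _ _)) // leq_add2l leq_imset_card.
Qed.

(* Two distinct vertices of the same color cannot both be representatives. *)
Lemma repr_cover_mono x y : x != y -> phi x = phi y -> x \in repr_cover.
Proof.
move=> neq_xy phixy; rewrite in_setU in_setC.
have [xR|//] := boolP (x \in color_reprs).
have yNR : y \notin color_reprs.
  by apply: contra neq_xy => yR; rewrite (color_reprs_inj xR yR phixy).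
apply/orP; right; apply/imsetP; exists y; rewrite ?in_setC //.
by move: xR; rewrite inE => /eqP {1}<-; apply: color_repr_eq.
Qed.

Lemma repr_cover_2transversal E : C_coloring E phi -> is_2transversal E repr_cover.
Proof.
move=> Cphi; apply/forall_inP => e eE.
have [x [y [xe ye neq_xy phixy]]] := Cphi e eE.
apply/card_gt1P; exists x, y; rewrite !in_setI xe ye.
by rewrite (repr_cover_mono neq_xy) // (repr_cover_mono _ (esym phixy)) // eq_sym.
Qed.

End ColorRepresentative.

Lemma tau2_leq_C_coloring E phi :
  C_coloring E phi -> tau2 E <= 2 * (#|X| - ncolors phi).
Proof.
move=> Cphi; apply: leq_trans (card_repr_cover phi).
exact/tau2_leq/repr_cover_2transversal.
Qed.

Section CollapseColoring.
Variable T : {set X}.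

Definition collapse_coloring (x : X) : nat := if x \in T then 0 else (enum_rank x).+1.

Lemma ncolors_collapse x0 :
  x0 \in T -> ncolors collapse_coloring = #|~: T|.+1.
Proof.
move=> x0T; have -> : #|~: T|.+1 = #|x0 |: ~: T| by rewrite cardsU1 in_setC x0T.
apply: ncolors_eq_card => [x y|x].
  rewrite !in_setU1 !in_setC /collapse_coloring.
  case/orP=> [/eqP ->|/negbTE ->]; case/orP=> [/eqP ->|/negbTE ->]; rewrite ?x0T //.
  by move=> [/val_inj/enum_rank_inj].
have [xT|xNT] := boolP (x \in T).
  by exists x0; rewrite ?setU11 // /collapse_coloring x0T xT.
by exists x; rewrite // in_setU1 in_setC xNT orbT.
Qed.

Lemma collapse_C_coloring E : is_2transversal E T -> C_coloring E collapse_coloring.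
Proof.
move=> /forall_inP ET e eE; have /card_gt1P [x [y [xeT yeT neq_xy]]] := ET e eE.
move: xeT yeT; rewrite !in_setI => /andP [xe xT] /andP [ye yT].
by exists x, y; rewrite /collapse_coloring xT yT.
Qed.

End CollapseColoring.

Lemma dec_leq_2transversal E T :
  E != set0 -> is_2transversal E T -> dec E <= #|T| - 1.
Proof.
move=> /set0Pn [e0 e0E] ET; have /forall_inP/(_ e0 e0E)/card_gt1P := ET.
case=> x0 [_ [/setIP [_ x0T] _ _]].
have := ncolors_leq_chibar (collapse_C_coloring ET).
rewrite (ncolors_collapse x0T) /dec cardsCs setCK; lia.
Qed.

End Colorings.

Lemma tau2_leq_2dec (X : finType) (E : {set {set X}}) : tau2 E <= 2 * dec E.
Proof.
rewrite /dec /chibar.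
apply: (big_ind (fun m => tau2 E <= 2 * (#|X| - m))) => [||k /uses_colorsP].
- by rewrite subn0 (leq_trans (tau2_leq_card E)) // leq_pmull.
- by move=> m1 m2; rewrite /maxn; case: ltnP.
by case=> phi [Cphi <-]; apply: tau2_leq_C_coloring.
Qed.

Lemma dec_leq_tau2 (X : finType) (E : {set {set X}}) :
  is_hypergraph E -> E != set0 -> dec E <= tau2 E - 1.
Proof.
move=> hE nE; rewrite /tau2; apply: (big_ind (fun m => dec E <= m - 1)) => [||T].
- rewrite -cardsT; apply: dec_leq_2transversal => //.
  by apply/forall_inP => e eE; rewrite setIT hE.
- by move=> m1 m2; rewrite /minn; case: ltnP.
exact: dec_leq_2transversal.
Qed.

Theorem proposition1 :
  (forall (X : finType) (E : {set {set X}}),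
      is_hypergraph E -> tau2 E <= 2 * dec E)
  /\ (forall (X : finType) (E : {set {set X}}),
      is_hypergraph E -> E != set0 -> dec E <= tau2 E - 1)
  /\ (exists (X : finType) (E : {set {set X}}),
      [/\ is_hypergraph E, E != set0 & tau2 E = 2 * dec E])
  /\ (exists (X : finType) (E : {set {set X}}),
      [/\ is_hypergraph E, E != set0 & dec E = tau2 E - 1]).
Proof.
pose E := [set [set: bool]].
have hE : is_hypergraph E by move=> e /set1P ->; rewrite cardsT card_bool.
have nE : E != set0 by apply/set0Pn; exists setT; rewrite set11.
have lb := tau2_leq_2dec E; have ub := dec_leq_tau2 hE nE.
have tau2_le2 : tau2 E <= 2 by rewrite -card_bool tau2_leq_card.
split; first by move=> X E' _; apply: tau2_leq_2dec.
split; first exact: dec_leq_tau2.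
by split; exists bool, E; split => //; lia.
Qed.
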